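(* (a) Let $\mathcal P(\boldsymbol\alpha,\boldsymbol\ell)$ be a non-exceptional curvilinear polygon with $n$ vertices, and let $\sigma>0$ be a root of $F^{\mathcal P}(\boldsymbol\alpha,\boldsymbol\ell,\cdot)$. Then $\sigma$ is a quasi-eigenvalue of multiplicity two if additionally $F_{\rm odd}(\boldsymbol\alpha,\boldsymbol\ell,\sigma)=0$, and of multiplicity one otherwise. (b) Let $\mathcal P(\boldsymbol\alpha,\boldsymbol\ell)$ have exceptional angles, with exceptional boundary components $\mathcal Y_1,\dots,\mathcal Y_K$ as described in the context, $\mathcal Y_\kappa$ having angle vector $\boldsymbol\alpha^{(\kappa)}$ and length vector $\boldsymbol\ell^{(\kappa)}$. Then $\sigma\ge0$ is a quasi-eigenvalue if and only if for some $\kappa\in\{1,\dots,K\}$ it is a root of $F_{\rm even}(\boldsymbol\alpha^{(\kappa)},\boldsymbol\ell^{(\kappa)},\cdot)$ in the case $\mathcal O(\alpha_{E_{\kappa-1}})=\mathcal O(\alpha_{E_\kappa})$, respectively of $F_{\rm odd}(\boldsymbol\alpha^{(\kappa)},\boldsymbol\ell^{(\kappa)},\cdot)$ in the case $\mathcal O(\alpha_{E_{\kappa-1}})=-\mathcal O(\alpha_{E_\kappa})$. The multiplicity of a quasi-eigenvalue $\sigma>0$ equals the number of $\kappa$ for which $\sigma$ is a root of the corresponding polynomial, and the multiplicity of $\sigma=0$ is half the number of $\kappa$ for which $F_{\rm odd}$ is the corresponding polynomial.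
   Context: For $\boldsymbol\zeta\in\{\pm1\}^n$ (cyclic $\zeta_{n+1}=\zeta_1$), $\mathrm{ch}(\boldsymbol\zeta)=\{j:\zeta_j\ne\zeta_{j+1}\}$, $\mathfrak p_{\boldsymbol\zeta}(\boldsymbol\alpha)=\prod_{j\in\mathrm{ch}(\boldsymbol\zeta)}\cos(\pi^2/(2\alpha_j))$ (empty product $1$). For $\boldsymbol\alpha\in(0,\pi)^n$, $\boldsymbol\ell\in(0,\infty)^n$: $F_{\rm even}(\boldsymbol\alpha,\boldsymbol\ell,\sigma)=\sum_{\boldsymbol\zeta\in\{\pm1\}^n,\zeta_1=1}\mathfrak p_{\boldsymbol\zeta}(\boldsymbol\alpha)\cos(\boldsymbol\ell\cdot\boldsymbol\zeta\sigma)$, $F_{\rm odd}(\boldsymbol\alpha,\boldsymbol\ell,\sigma)=\sum_{\boldsymbol\zeta\in\{\pm1\}^n,\zeta_1=1}\mathfrak p_{\boldsymbol\zeta}(\boldsymbol\alpha)\sin(\boldsymbol\ell\cdot\boldsymbol\zeta\sigma)$, $F^{\mathcal P}=F_{\rm even}-\prod_{j=1}^n\sin(\pi^2/(2\alpha_j))$. A curvilinear polygon $\mathcal P(\boldsymbol\alpha,\boldsymbol\ell)$: bounded simply connected planar domain bounded by $n$ smooth arcs $I_j$ of lengths $\ell_j$, vertices $V_1,\dots,V_n$ clockwise (cyclic indices), $I_j$ from $V_{j-1}$ to $V_j$, interior angle $\alpha_j\in(0,\pi)$ at $V_j$. $\mathcal E=\{\pi/(2k)\}$, $\mathcal O(\pi/(2k))=(-1)^k$;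 non-exceptional means no $\alpha_j\in\mathcal E$. $\mathtt A(\alpha)=\begin{pmatrix}\csc\frac{\pi^2}{2\alpha}&-i\cot\frac{\pi^2}{2\alpha}\\ i\cot\frac{\pi^2}{2\alpha}&\csc\frac{\pi^2}{2\alpha}\end{pmatrix}$ ($\alpha\notin\mathcal E$), $\mathtt B(\ell,\sigma)=\operatorname{diag}(e^{i\ell\sigma},e^{-i\ell\sigma})$. Non-exceptional quasi-eigenvalues: $\sigma\ge0$ with $1$ an eigenvalue of $\mathtt T(\sigma)=\mathtt A(\alpha_n)\mathtt B(\ell_n,\sigma)\cdots\mathtt A(\alpha_1)\mathtt B(\ell_1,\sigma)$, multiplicity of $\sigma>0$ = geometric multiplicity of eigenvalue $1$. Exceptional case: exceptional vertices $V_{E_1},\dots,V_{E_K}$, $1\le E_1<\dots<E_K=n$, $E_0:=E_K$; the exceptional component $\mathcal Y_\kappa$ consists of the arcs $I_{E_{\kappa-1}+1},\dots,I_{E_\kappa}$ (mod $n$), with $\boldsymbol\ell^{(\kappa)}=(\ell_{E_{\kappa-1}+1},\dots,\ell_{E_\kappa})$ and $\boldsymbol\alpha^{(\kappa)}=(\alpha_{E_{\kappa-1}+1},\dots,\alpha_{E_\kappa})$ (last entry the exceptional angle). $\mathtt U_\kappa(\sigma)=\mathtt B(\ell_{E_\kappa},\sigma)\mathtt A(\alpha_{E_\kappa-1})\cdots\mathtt A(\alpha_{E_{\kappa-1}+1})\mathtt B(\ell_{E_{\kappa-1}+1},\sigma)$; $\mathbf X_{\rm even}=\frac1{\sqrt2}(e^{-i\pi/4},e^{i\pi/4})^T$,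 $\mathbf X_{\rm odd}=\frac1{\sqrt2}(e^{i\pi/4},e^{-i\pi/4})^T$, $\mathbf X(\alpha)=\mathbf X_{\rm even}$ if $\mathcal O(\alpha)=1$ else $\mathbf X_{\rm odd}$; $u\cdot v=u_1\bar v_1+u_2\bar v_2$. $\sigma\ge0$ is a quasi-eigenvalue iff $\mathtt U_\kappa(\sigma)\mathbf X(\alpha_{E_{\kappa-1}})\cdot\mathbf X(\alpha_{E_\kappa})=0$ for some $\kappa$; multiplicity of $\sigma>0$ = number of such $\kappa$; multiplicity of $0$ = half the number of $\kappa$ with $\mathcal O(\alpha_{E_{\kappa-1}})\ne\mathcal O(\alpha_{E_\kappa})$. *)

From Stdlib Require Import Reals List ClassicalEpsilon.
Import ListNotations.
Open Scope R_scope.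

Definition sumR (f : nat -> R) (m : nat) : R := fold_right Rplus 0 (map f (seq 1 m)).
Definition prodR (f : nat -> R) (m : nat) : R := fold_right Rmult 1 (map f (seq 1 m)).

Definition pdec (P : Prop) : bool := if excluded_middle_informative P then true else false.
Definition count_P (P : nat -> Prop) (K : nat) : nat :=
  length (filter (fun k => pdec (P k)) (seq 1 K)).

Fixpoint signs (m : nat) : list (list R) :=
  match m with
  | O => [ [] ]
  | S m' => flat_map (fun t => [1 :: t; (-1) :: t]) (signs m')
  end.
Definition zetas (m : nat) : list (list R) := map (cons 1) (signs (m - 1)).
(* zeta_j, 1-based *)
Definition zeta (z : list R) (j : nat) : R := nth (j - 1) z 0.
Definition nextc (m j : nat) : nat := if Nat.eqb j m then 1%nat else S j.

(* p_zeta(alpha) = prod_{j in ch(zeta)} cos(pi^2/(2 alpha_j)) *)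
Definition pz (alpha : nat -> R) (m : nat) (z : list R) : R :=
  prodR (fun j => if Req_EM_T (zeta z j) (zeta z (nextc m j)) then 1
                  else cos (PI ^ 2 / (2 * alpha j))) m.
Definition dotz (ell : nat -> R) (m : nat) (z : list R) : R :=
  sumR (fun j => ell j * zeta z j) m.

Definition F_even (m : nat) (alpha ell : nat -> R) (sigma : R) : R :=
  fold_right Rplus 0 (map (fun z => pz alpha m z * cos (dotz ell m z * sigma)) (zetas m)).
Definition F_odd (m : nat) (alpha ell : nat -> R) (sigma : R) : R :=
  fold_right Rplus 0 (map (fun z => pz alpha m z * sin (dotz ell m z * sigma)) (zetas m)).
Definition F_P (m : nat) (alpha ell : nat -> R) (sigma : R) : R :=
  F_even m alpha ell sigma - prodR (fun j => sin (PI ^ 2 / (2 * alpha j))) m.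

Definition is_exceptional (a : R) : Prop :=
  exists k : nat, (1 <= k)%nat /\ a = PI / (2 * INR k).
(* O(pi/(2k)) = (-1)^k *)
Definition O_sign (k : nat) : R := (-1) ^ k.

Definition C := (R * R)%type.
Definition RtoC (r : R) : C := (r, 0).
Definition C0 : C := (0, 0).
Definition C1 : C := (1, 0).
Definition Cadd (z w : C) : C := (fst z + fst w, snd z + snd w).
Definition Cmul (z w : C) : C :=
  (fst z * fst w - snd z * snd w, fst z * snd w + snd z * fst w).
Definition Cconj (z : C) : C := (fst z, - snd z).
Definition Cexpi (x : R) : C := (cos x, sin x).

Definition V2 := (C * C)%type.
Definition V0 : V2 := (C0, C0).
Definition Vadd (u v : V2) : V2 := (Cadd (fst u) (fst v), Cadd (snd u) (snd v)).
Definition Vscale (a : C) (v : V2) : V2 := (Cmul a (fst v), Cmul a (snd v)).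
Definition Vdot (u v : V2) : C :=
  Cadd (Cmul (fst u) (Cconj (fst v))) (Cmul (snd u) (Cconj (snd v))).

Record M2 := mkM2 { m11 : C; m12 : C; m21 : C; m22 : C }.
Definition M2id : M2 := mkM2 C1 C0 C0 C1.
Definition Mmul (A B : M2) : M2 :=
  mkM2 (Cadd (Cmul (m11 A) (m11 B)) (Cmul (m12 A) (m21 B)))
       (Cadd (Cmul (m11 A) (m12 B)) (Cmul (m12 A) (m22 B)))
       (Cadd (Cmul (m21 A) (m11 B)) (Cmul (m22 A) (m21 B)))
       (Cadd (Cmul (m21 A) (m12 B)) (Cmul (m22 A) (m22 B))).
Definition Mapply (A : M2) (v : V2) : V2 :=
  (Cadd (Cmul (m11 A) (fst v)) (Cmul (m12 A) (snd v)),
   Cadd (Cmul (m21 A) (fst v)) (Cmul (m22 A) (snd v))).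

Definition Amat (alpha : R) : M2 :=
  let t := PI ^ 2 / (2 * alpha) in
  mkM2 (RtoC (/ sin t)) (0, - (cos t / sin t)) (0, cos t / sin t) (RtoC (/ sin t)).
Definition Bmat (l sigma : R) : M2 :=
  mkM2 (Cexpi (l * sigma)) C0 C0 (Cexpi (- (l * sigma))).

(* Tprod o len = A(a_{o+len})B(l_{o+len}) ... A(a_{o+1})B(l_{o+1}) *)
Fixpoint Tprod (alpha ell : nat -> R) (o len : nat) (sigma : R) : M2 :=
  match len with
  | O => M2id
  | S k => Mmul (Mmul (Amat (alpha (o + S k)%nat)) (Bmat (ell (o + S k)%nat) sigma))
                (Tprod alpha ell o k sigma)
  end.
Definition Tmat (n : nat) (alpha ell : nat -> R) (sigma : R) : M2 :=
  Tprod alpha ell 0 n sigma.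

Definition eigvec1 (T : M2) (v : V2) : Prop := Mapply T v = v.
Definition lin_indep (v w : V2) : Prop :=
  forall a b : C, Vadd (Vscale a v) (Vscale b w) = V0 -> a = C0 /\ b = C0.
Definition geom_mult1 (T : M2) : nat :=
  if pdec (exists v w, eigvec1 T v /\ eigvec1 T w /\ lin_indep v w) then 2%nat
  else if pdec (exists v, eigvec1 T v /\ v <> V0) then 1%nat else 0%nat.

Definition is_qe_nonexc (n : nat) (alpha ell : nat -> R) (sigma : R) : Prop :=
  0 <= sigma /\ exists v, v <> V0 /\ eigvec1 (Tmat n alpha ell sigma) v.
Definition qe_mult_nonexc (n : nat) (alpha ell : nat -> R) (sigma : R) : nat :=
  geom_mult1 (Tmat n alpha ell sigma).

(* Exceptional vertices V_{E 1} < ... < V_{E K} = V_n; kexc kappa is the k with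
   alpha_{E kappa} = pi/(2k).  E_0 := E_K. *)
(* index offset of component kappa: arcs offset+1 .. E kappa  (mod n) *)
Definition offset (E : nat -> nat) (kappa : nat) : nat :=
  if Nat.eqb kappa 1 then 0%nat else E (kappa - 1)%nat.
Definition kprev (K : nat) (kexc : nat -> nat) (kappa : nat) : nat :=
  if Nat.eqb kappa 1 then kexc K else kexc (kappa - 1)%nat.

Definition X_even : V2 :=
  (Cmul (RtoC (/ sqrt 2)) (Cexpi (- (PI / 4))), Cmul (RtoC (/ sqrt 2)) (Cexpi (PI / 4))).
Definition X_odd : V2 :=
  (Cmul (RtoC (/ sqrt 2)) (Cexpi (PI / 4)), Cmul (RtoC (/ sqrt 2)) (Cexpi (- (PI / 4)))).
(* X(alpha) for alpha = pi/(2k): X_even iff O(alpha) = (-1)^k = 1 *)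
Definition Xk (k : nat) : V2 := if Nat.even k then X_even else X_odd.

(* U_kappa(sigma) = B(l_{E_kappa}) A(a_{E_kappa - 1}) ... A(a_{E_{kappa-1}+1}) B(l_{E_{kappa-1}+1}) *)
Definition Umat (alpha ell : nat -> R) (E : nat -> nat) (kappa : nat) (sigma : R) : M2 :=
  let o := offset E kappa in
  let e := E kappa in
  Mmul (Bmat (ell e) sigma) (Tprod alpha ell o (e - 1 - o) sigma).

Definition qe_cond_exc (alpha ell : nat -> R) (K : nat) (E kexc : nat -> nat)
    (kappa : nat) (sigma : R) : Prop :=
  Vdot (Mapply (Umat alpha ell E kappa sigma) (Xk (kprev K kexc kappa))) (Xk (kexc kappa)) = C0.

Definition is_qe_exc (alpha ell : nat -> R) (K : nat) (E kexc : nat -> nat) (sigma : R) : Prop :=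
  0 <= sigma /\ exists kappa, (1 <= kappa <= K)%nat /\ qe_cond_exc alpha ell K E kexc kappa sigma.

Definition qe_mult_exc (alpha ell : nat -> R) (K : nat) (E kexc : nat -> nat) (sigma : R) : nat :=
  if pdec (0 < sigma) then count_P (fun kappa => qe_cond_exc alpha ell K E kexc kappa sigma) K
  else Nat.div2 (count_P (fun kappa => O_sign (kprev K kexc kappa) <> O_sign (kexc kappa)) K).

Definition comp_len (E : nat -> nat) (kappa : nat) : nat := (E kappa - offset E kappa)%nat.
Definition comp_vec (v : nat -> R) (E : nat -> nat) (kappa : nat) : nat -> R :=
  fun i => v (offset E kappa + i)%nat.

Definition comp_root (alpha ell : nat -> R) (K : nat) (E kexc : nat -> nat)
    (kappa : nat) (sigma : R) : Prop :=
  let m := comp_len E kappa in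
  (O_sign (kprev K kexc kappa) = O_sign (kexc kappa) ->
     F_even m (comp_vec alpha E kappa) (comp_vec ell E kappa) sigma = 0) /\
  (O_sign (kprev K kexc kappa) = - O_sign (kexc kappa) ->
     F_odd m (comp_vec alpha E kappa) (comp_vec ell E kappa) sigma = 0).

(* Writing t_j = pi^2/(2 alpha_j) and c_j = cos t_j, the vertex matrix factors as
   A(alpha_j) = (1/sin t_j) Anorm(c_j) with Anorm(c) = [[1, -ic], [ic, 1]].  The central identity
   ([Qprod_core]) says that a product of normalised steps Anorm(c_j) B(l_j, s) over arcs 1..m is
        [[ P + iP',  -Q' - iQ ],  [ -Q' + iQ,  P - iP' ]],
   where P, P' are F_even, F_odd (sums over sign vectors zeta with zeta_1 = 1 of the cyclic
   sign-change weight p_zeta times cos / sin of (l.zeta) s) and Q, Q' are the same sums with the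
   "twisted" weight, in which the closing step m -> 1 contributes c_m exactly when it is not a sign
   change.  It is proved by induction on m, peeling off the first arc: sign vectors of length m+1
   are 1::z and 1::(-z), and the second choice swaps cyclic and twisted weights.
   (a) The determinant gives P^2 + P'^2 - Q^2 - Q'^2 = prod sin^2 t_j; F^P = 0 means P = prod sin t_j,
       so P'^2 = Q^2 + Q'^2 and a 2x2 computation ([core_eigenspace]) shows that the eigenspace of 1
       of the monodromy is C^2 if F_odd = 0 and a line otherwise.
   (b) On a component Y_kappa the closing vertex is exceptional, so c_m = O(alpha_{E_kappa}) = +-1
       while A(alpha_{E_kappa}) is left out of U_kappa (equivalently c_m is replaced by 0).  The
       cyclic sums are affine in c_m, and pairing with X_even / X_odd extracts exactly
       F_even or F_odd of the component ([core_pairing]). *)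

From Stdlib Require Import Reals List Lra Lia ZArith ClassicalEpsilon.
Import ListNotations.
Open Scope R_scope.

Definition SumL (l : list (list R)) (g : list R -> R) : R := fold_right Rplus 0 (map g l).

Lemma SumL_ext l f g : (forall z, In z l -> f z = g z) -> SumL l f = SumL l g.
Proof.
  intros H; unfold SumL; f_equal; apply map_ext_in; exact H.
Qed.

Lemma SumL_map l h g : SumL (map h l) g = SumL l (fun z => g (h z)).
Proof. unfold SumL; rewrite map_map; reflexivity. Qed.

Lemma SumL_app l1 l2 g : SumL (l1 ++ l2) g = SumL l1 g + SumL l2 g.
Proof. unfold SumL; induction l1 as [|x l1 IH]; simpl; [ring|rewrite IH; ring]. Qed.

Lemma SumL_flat_map {A} (L : list A) F g :
  SumL (flat_map F L) g = fold_right Rplus 0 (map (fun t => SumL (F t) g) L).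
Proof. induction L as [|x L IH]; simpl; [reflexivity|rewrite SumL_app, IH; reflexivity]. Qed.

Lemma SumL_plus l f g : SumL l (fun z => f z + g z) = SumL l f + SumL l g.
Proof. unfold SumL; induction l as [|x l IH]; simpl; [ring|rewrite IH; ring]. Qed.

Lemma SumL_lin2 l a1 a2 f1 f2 :
  SumL l (fun z => a1 * f1 z + a2 * f2 z) = a1 * SumL l f1 + a2 * SumL l f2.
Proof. unfold SumL; induction l as [|x l IH]; simpl; [ring|rewrite IH; ring]. Qed.

Lemma SumL_lin4 l a1 a2 a3 a4 f1 f2 f3 f4 :
  SumL l (fun z => a1 * f1 z + a2 * f2 z + a3 * f3 z + a4 * f4 z) =
  a1 * SumL l f1 + a2 * SumL l f2 + a3 * SumL l f3 + a4 * SumL l f4.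
Proof. unfold SumL; induction l as [|x l IH]; simpl; [ring|rewrite IH; ring]. Qed.

Lemma fold_Rplus_snoc l x : fold_right Rplus 0 (l ++ [x]) = fold_right Rplus 0 l + x.
Proof. induction l as [|y l IH]; simpl; [ring|rewrite IH; ring]. Qed.

Lemma fold_Rmult_snoc l x : fold_right Rmult 1 (l ++ [x]) = fold_right Rmult 1 l * x.
Proof. induction l as [|y l IH]; simpl; [ring|rewrite IH; ring]. Qed.

Lemma prodR_S f m : prodR f (S m) = prodR f m * f (S m).
Proof. unfold prodR; rewrite seq_S, map_app; apply fold_Rmult_snoc. Qed.

Lemma sumR_S f m : sumR f (S m) = sumR f m + f (S m).
Proof. unfold sumR; rewrite seq_S, map_app; apply fold_Rplus_snoc. Qed.

Lemma prodR_front f m : prodR f (S m) = f 1%nat * prodR (fun j => f (S j)) m.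
Proof. unfold prodR; simpl; rewrite <- seq_shift, map_map; reflexivity. Qed.

Lemma sumR_front f m : sumR f (S m) = f 1%nat + sumR (fun j => f (S j)) m.
Proof. unfold sumR; simpl; rewrite <- seq_shift, map_map; reflexivity. Qed.

Lemma prodR_ext f g m : (forall j, (1 <= j <= m)%nat -> f j = g j) -> prodR f m = prodR g m.
Proof.
  induction m as [|m IH]; intros H; [reflexivity|].
  rewrite !prodR_S, IH, (H (S m)); [reflexivity|lia|intros; apply H; lia].
Qed.

Lemma sumR_ext f g m : (forall j, (1 <= j <= m)%nat -> f j = g j) -> sumR f m = sumR g m.
Proof.
  induction m as [|m IH]; intros H; [reflexivity|].
  rewrite !sumR_S, IH, (H (S m)); [reflexivity|lia|intros; apply H; lia].
Qed.

Lemma sumR_opp f m : sumR (fun j => - f j) m = - sumR f m.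
Proof. induction m as [|m IH]; [unfold sumR; simpl; ring|rewrite !sumR_S, IH; ring]. Qed.

Lemma prodR_mul f g m : prodR (fun j => f j * g j) m = prodR f m * prodR g m.
Proof. induction m as [|m IH]; [unfold prodR; simpl; ring|rewrite !prodR_S, IH; ring]. Qed.

Lemma prodR_nz f m : (forall j, (1 <= j <= m)%nat -> f j <> 0) -> prodR f m <> 0.
Proof.
  induction m as [|m IH]; intros H; [unfold prodR; simpl; lra|].
  rewrite prodR_S; apply Rmult_integral_contrapositive_currified; [apply IH|]; intros; apply H; lia.
Qed.

Definition negv (z : list R) : list R := map Ropp z.

Lemma zeta_cons1 x z : zeta (x :: z) 1 = x.
Proof. reflexivity. Qed.

Lemma zeta_consS x z j : (1 <= j)%nat -> zeta (x :: z) (S j) = zeta z j.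
Proof. intros Hj; unfold zeta; destruct j; [lia|]; simpl; rewrite Nat.sub_0_r; reflexivity. Qed.

Lemma zeta_negv z j : zeta (negv z) j = - zeta z j.
Proof.
  unfold zeta, negv; generalize (j - 1)%nat.
  induction z as [|x z IH]; intros i; destruct i; simpl; auto; ring.
Qed.

Lemma SumL_signs_negv k (H : list R -> R) :
  SumL (signs k) (fun t => H (negv t)) = SumL (signs k) H.
Proof.
  revert H; induction k as [|k IH]; intros H; [reflexivity|].
  simpl signs; rewrite !SumL_flat_map.
  pose proof (IH (fun u => H (-1 :: u) + (H (1 :: u) + 0))) as E; unfold SumL in E.
  transitivity (fold_right Rplus 0
    (map (fun t => (fun u => H (-1 :: u) + (H (1 :: u) + 0)) (negv t)) (signs k))).
  - f_equal; apply map_ext; intros t; unfold SumL; simpl.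
    replace (- (1)) with (-1) by ring; replace (- (-1)) with 1 by ring; reflexivity.
  - rewrite E; f_equal; apply map_ext; intros t; unfold SumL; simpl; ring.
Qed.

Lemma SumL_zetas_S m G : (1 <= m)%nat ->
  SumL (zetas (S m)) G = SumL (zetas m) (fun z => G (1 :: z) + G (1 :: negv z)).
Proof.
  intros Hm; destruct m as [|k]; [lia|].
  unfold zetas; replace (S (S k) - 1)%nat with (S k) by lia; replace (S k - 1)%nat with k by lia.
  rewrite !SumL_map, SumL_plus.
  transitivity (SumL (signs k) (fun t => G (1 :: 1 :: t)) +
                SumL (signs k) (fun t => G (1 :: -1 :: t))).
  - simpl signs; rewrite SumL_flat_map, <- SumL_plus.
    unfold SumL at 2; f_equal; apply map_ext; intros t; unfold SumL; simpl; ring.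
  - f_equal; rewrite <- (SumL_signs_negv k (fun t => G (1 :: -1 :: t))).
    apply SumL_ext; intros t _; unfold negv; simpl.
    replace (- (1)) with (-1) by ring; reflexivity.
Qed.

Lemma signs_mem k t : In t (signs k) -> length t = k /\ (forall x, In x t -> x = 1 \/ x = -1).
Proof.
  revert t; induction k as [|k IH]; intros t H; simpl in H.
  - destruct H as [<-|[]]; simpl; split; auto; intros _ [].
  - apply in_flat_map in H; destruct H as [u [Hu H]]; apply IH in Hu; destruct Hu as [Hl Hx].
    simpl in H; destruct H as [<-|[<-|[]]]; simpl; (split; [lia|]); intros x [<-|Hi]; auto.
Qed.

Lemma zetas_mem m z : (1 <= m)%nat -> In z (zetas m) ->
  zeta z 1 = 1 /\ (forall j, (1 <= j <= m)%nat -> zeta z j = 1 \/ zeta z j = -1).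
Proof.
  intros Hm H; unfold zetas in H; apply in_map_iff in H; destruct H as [t [<- Ht]].
  apply signs_mem in Ht; destruct Ht as [Hl Hx]; split; [reflexivity|].
  intros j Hj; unfold zeta.
  assert (Hi : In (nth (j-1) (1 :: t) 0) (1 :: t)) by (apply nth_In; simpl; lia).
  destruct Hi as [<-|Hi]; auto.
Qed.

(* Sign-change weights with a general coefficient sequence c (c_j = cos(pi^2/(2 alpha_j))):
   - [chain_w c z m]: product over the open chain 1..m of c_j at each sign change j -> j+1;
   - [cyc_w c m z]: the cyclic weight p_zeta (closing step m -> 1 included);
   - [tw_w c m z]: the twisted cyclic weight, where the closing step contributes c_m
     exactly when it is NOT a sign change. *)
Definition chain_w (c : nat -> R) (z : list R) (m : nat) : R :=
  prodR (fun j => if Req_EM_T (zeta z j) (zeta z (S j)) then 1 else c j) m.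
Definition cyc_w (c : nat -> R) (m : nat) (z : list R) : R :=
  prodR (fun j => if Req_EM_T (zeta z j) (zeta z (nextc m j)) then 1 else c j) m.
Definition tw_w (c : nat -> R) (m : nat) (z : list R) : R :=
  chain_w c z (m - 1) * (if Req_EM_T (zeta z m) (zeta z 1) then c m else 1).

Definition sh (f : nat -> R) : nat -> R := fun j => f (S j).

Ltac case_req := repeat match goal with |- context [Req_EM_T ?a ?b] => destruct (Req_EM_T a b) end.

Lemma cyc_w_split c m z : cyc_w c (S m) z =
  chain_w c z m * (if Req_EM_T (zeta z (S m)) (zeta z 1) then 1 else c (S m)).
Proof.
  unfold cyc_w; rewrite prodR_S; f_equal.
  - apply prodR_ext; intros j Hj; unfold nextc.
    replace (Nat.eqb j (S m)) with false by (symmetry; apply Nat.eqb_neq; lia); reflexivity.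
  - unfold nextc; rewrite Nat.eqb_refl; reflexivity.
Qed.

Lemma chain_w_negv c z m : chain_w c (negv z) m = chain_w c z m.
Proof.
  unfold chain_w; apply prodR_ext; intros j _; rewrite !zeta_negv; case_req; auto; lra.
Qed.

Lemma chain_w_cons c x u m : chain_w c (x :: u) (S m) =
  (if Req_EM_T x (zeta u 1) then 1 else c 1%nat) * chain_w (sh c) u m.
Proof.
  unfold chain_w; rewrite prodR_front; f_equal.
  apply prodR_ext; intros j Hj; rewrite !zeta_consS by lia; reflexivity.
Qed.

(* Prepending -z exchanges the cyclic and the
   twisted weight and produces a sign change at vertex 1. *)
Lemma cyc_w_cons_same c m z : (1 <= m)%nat -> In z (zetas m) ->
  cyc_w c (S m) (1 :: z) = cyc_w (sh c) m z.
Proof.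
  intros Hm Hz; destruct (zetas_mem m z Hm Hz) as [H1 _].
  destruct m as [|m]; [lia|]; rewrite !cyc_w_split, chain_w_cons, zeta_consS by lia.
  rewrite zeta_cons1, H1; unfold sh; case_req; try lra; ring.
Qed.

Lemma cyc_w_cons_neg c m z : (1 <= m)%nat -> In z (zetas m) ->
  cyc_w c (S m) (1 :: negv z) = c 1%nat * tw_w (sh c) m z.
Proof.
  intros Hm Hz; destruct (zetas_mem m z Hm Hz) as [H1 Hpm].
  destruct m as [|m]; [lia|]; rewrite !cyc_w_split, chain_w_cons, zeta_consS by lia.
  unfold tw_w; replace (S m - 1)%nat with m by lia.
  rewrite zeta_cons1, chain_w_negv, !zeta_negv, H1.
  destruct (Hpm (S m)) as [E|E]; [lia| |]; rewrite E; unfold sh; case_req; try lra; ring.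
Qed.

Lemma tw_w_cons_same c m z : (1 <= m)%nat -> In z (zetas m) ->
  tw_w c (S m) (1 :: z) = tw_w (sh c) m z.
Proof.
  intros Hm Hz; destruct (zetas_mem m z Hm Hz) as [H1 _].
  destruct m as [|m]; [lia|]; unfold tw_w.
  replace (S (S m) - 1)%nat with (S m) by lia; replace (S m - 1)%nat with m by lia.
  rewrite chain_w_cons, zeta_consS, zeta_cons1, H1 by lia; unfold sh; case_req; try lra; ring.
Qed.

Lemma tw_w_cons_neg c m z : (1 <= m)%nat -> In z (zetas m) ->
  tw_w c (S m) (1 :: negv z) = c 1%nat * cyc_w (sh c) m z.
Proof.
  intros Hm Hz; destruct (zetas_mem m z Hm Hz) as [H1 Hpm].
  destruct m as [|m]; [lia|]; rewrite cyc_w_split; unfold tw_w.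
  replace (S (S m) - 1)%nat with (S m) by lia.
  rewrite chain_w_cons, zeta_consS, zeta_cons1, chain_w_negv, !zeta_negv, H1 by lia.
  destruct (Hpm (S m)) as [E|E]; [lia| |]; rewrite E; unfold sh; case_req; try lra; ring.
Qed.

Lemma dotz_cons l x u m : dotz l (S m) (x :: u) = l 1%nat * x + dotz (sh l) m u.
Proof.
  unfold dotz; rewrite sumR_front; f_equal.
  apply sumR_ext; intros j Hj; unfold sh; rewrite zeta_consS by lia; reflexivity.
Qed.

Lemma dotz_negv l m z : dotz l m (negv z) = - dotz l m z.
Proof. unfold dotz; rewrite <- sumR_opp; apply sumR_ext; intros j _; rewrite zeta_negv; ring. Qed.

(* The four trigonometric sums: the cyclic ones are F_even/F_odd for c_j = cos(pi^2/(2 alpha_j));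
   the twisted ones use the twisted weight. *)
Definition cyc_cos c l s m := SumL (zetas m) (fun z => cyc_w c m z * cos (dotz l m z * s)).
Definition cyc_sin c l s m := SumL (zetas m) (fun z => cyc_w c m z * sin (dotz l m z * s)).
Definition tw_cos c l s m := SumL (zetas m) (fun z => tw_w c m z * cos (dotz l m z * s)).
Definition tw_sin c l s m := SumL (zetas m) (fun z => tw_w c m z * sin (dotz l m z * s)).

Section Recursion.
Variables (c l : nat -> R) (s : R) (m : nat).
Hypothesis Hm : (1 <= m)%nat.
Let t := l 1%nat * s.
Let c1 := c 1%nat.
Let A := cyc_cos (sh c) (sh l) s m.
Let A' := cyc_sin (sh c) (sh l) s m.
Let B := tw_cos (sh c) (sh l) s m.
Let B' := tw_sin (sh c) (sh l) s m.

Ltac peel_first_arc a1 a2 a3 a4 :=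
  unfold A, A', B, B', cyc_cos, cyc_sin, tw_cos, tw_sin;
  rewrite SumL_zetas_S by exact Hm;
  rewrite <- (SumL_lin4 _ a1 a2 a3 a4);
  apply SumL_ext; intros z Hz;
  rewrite ?cyc_w_cons_same, ?cyc_w_cons_neg, ?tw_w_cons_same, ?tw_w_cons_neg by auto;
  rewrite !dotz_cons, !dotz_negv; unfold t, c1;
  rewrite !Rmult_plus_distr_r, !Rmult_1_r, ?cos_plus, ?sin_plus,
    <- ?Ropp_mult_distr_l, ?cos_neg, ?sin_neg; ring.

Lemma cyc_cos_S : cyc_cos c l s (S m) = cos t * (A + c1 * B) - sin t * (A' - c1 * B').
Proof.
  transitivity (cos t * A + (- sin t) * A' + (cos t * c1) * B + (sin t * c1) * B'); [|ring].
  peel_first_arc (cos t) (- sin t) (cos t * c1) (sin t * c1).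
Qed.

Lemma cyc_sin_S : cyc_sin c l s (S m) = sin t * (A + c1 * B) + cos t * (A' - c1 * B').
Proof.
  transitivity (sin t * A + cos t * A' + (sin t * c1) * B + (- cos t * c1) * B'); [|ring].
  peel_first_arc (sin t) (cos t) (sin t * c1) (- cos t * c1).
Qed.

Lemma tw_cos_S : tw_cos c l s (S m) = cos t * (B + c1 * A) - sin t * (B' - c1 * A').
Proof.
  transitivity ((cos t * c1) * A + (sin t * c1) * A' + cos t * B + (- sin t) * B'); [|ring].
  peel_first_arc (cos t * c1) (sin t * c1) (cos t) (- sin t).
Qed.

Lemma tw_sin_S : tw_sin c l s (S m) = sin t * (B + c1 * A) + cos t * (B' - c1 * A').
Proof.
  transitivity ((sin t * c1) * A + (- cos t * c1) * A' + sin t * B + cos t * B'); [|ring].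
  peel_first_arc (sin t * c1) (- cos t * c1) (sin t) (cos t).
Qed.
End Recursion.

Lemma trig_sums_1 c l s :
  cyc_cos c l s 1 = cos (l 1%nat * s) /\ cyc_sin c l s 1 = sin (l 1%nat * s) /\
  tw_cos c l s 1 = c 1%nat * cos (l 1%nat * s) /\ tw_sin c l s 1 = c 1%nat * sin (l 1%nat * s).
Proof.
  assert (Hcyc : cyc_w c 1 [1] = 1) by (unfold cyc_w, nextc, prodR; simpl; case_req; [ring|congruence]).
  assert (Htw : tw_w c 1 [1] = c 1%nat) by (unfold tw_w, chain_w, prodR; simpl; case_req; [ring|congruence]).
  assert (Hdot : dotz l 1 [1] = l 1%nat) by (unfold dotz, sumR; simpl; unfold zeta; simpl; ring).
  unfold cyc_cos, cyc_sin, tw_cos, tw_sin, SumL, zetas; simpl.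
  rewrite Hcyc, Htw, Hdot; repeat split; ring.
Qed.

Definition Anorm (c : R) : M2 := mkM2 C1 (0, - c) (0, c) C1.
Definition Qstep (c l s : R) : M2 := Mmul (Anorm c) (Bmat l s).
Fixpoint Qprod (c l : nat -> R) (s : R) (m : nat) : M2 :=
  match m with O => M2id | S k => Mmul (Qstep (c (S k)) (l (S k)) s) (Qprod c l s k) end.
Definition Mscale (r : R) (M : M2) : M2 :=
  mkM2 (Cmul (RtoC r) (m11 M)) (Cmul (RtoC r) (m12 M)) (Cmul (RtoC r) (m21 M)) (Cmul (RtoC r) (m22 M)).
(* The shape of every product of normalised transfer matrices. *)
Definition Mcore (A A' B B' : R) : M2 := mkM2 (A, A') (- B', - B) (- B', B) (A, - A').

Ltac destruct_cplx := repeat match goal with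
  | M : M2 |- _ => destruct M
  | v : V2 |- _ => destruct v
  | v : (C * C)%type |- _ => destruct v
  | z : C |- _ => destruct z
  | z : (R * R)%type |- _ => destruct z end.
Ltac mx_eq := destruct_cplx;
  unfold Mscale, Mcore, Qstep, Anorm, Bmat, M2id, Mmul, Cadd, Cmul, RtoC, C1, C0, Cexpi; simpl;
  rewrite ?cos_neg, ?sin_neg; f_equal; f_equal; ring.

Lemma Mmul_assoc (X Y Z : M2) : Mmul X (Mmul Y Z) = Mmul (Mmul X Y) Z.
Proof. mx_eq. Qed.
Lemma Mmul_id_l X : Mmul M2id X = X.
Proof. mx_eq. Qed.
Lemma Mmul_id_r X : Mmul X M2id = X.
Proof. mx_eq. Qed.

Lemma Qprod_peel c l s m :
  Qprod c l s (S m) = Mmul (Qprod (sh c) (sh l) s m) (Qstep (c 1%nat) (l 1%nat) s).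
Proof.
  revert c l; induction m as [|m IH]; intros c l.
  - simpl; rewrite Mmul_id_l, Mmul_id_r; reflexivity.
  - change (Qprod c l s (S (S m))) with
      (Mmul (Qstep (c (S (S m))) (l (S (S m))) s) (Qprod c l s (S m))).
    rewrite IH, Mmul_assoc; reflexivity.
Qed.

Lemma Qprod_ext c c' l l' s m : (forall j, (1 <= j <= m)%nat -> c j = c' j /\ l j = l' j) ->
  Qprod c l s m = Qprod c' l' s m.
Proof.
  induction m as [|m IH]; intros H; simpl; auto.
  destruct (H (S m)) as [E1 E2]; [lia|]; rewrite E1, E2, IH; auto; intros; apply H; lia.
Qed.

(* Multiplying a matrix of core shape on the right by one more step keeps the shape, with
   exactly the recursion satisfied by the four trigonometric sums. *)
Lemma Mcore_step A A' B B' c l s :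
  let t := l * s in
  Mmul (Mcore A A' B B') (Qstep c l s) =
  Mcore (cos t * (A + c * B) - sin t * (A' - c * B')) (sin t * (A + c * B) + cos t * (A' - c * B'))
        (cos t * (B + c * A) - sin t * (B' - c * A')) (sin t * (B + c * A) + cos t * (B' - c * A')).
Proof. mx_eq. Qed.

Lemma Qprod_core c l s m : (1 <= m)%nat ->
  Qprod c l s m = Mcore (cyc_cos c l s m) (cyc_sin c l s m) (tw_cos c l s m) (tw_sin c l s m).
Proof.
  revert c l; induction m as [|m IH]; intros c l Hm; [lia|].
  destruct (Nat.eq_dec m 0) as [->|Hm0].
  - destruct (trig_sums_1 c l s) as [E1 [E2 [E3 E4]]]; rewrite E1, E2, E3, E4.
    simpl; rewrite Mmul_id_r; mx_eq.
  - rewrite Qprod_peel, IH, Mcore_step by lia.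
    rewrite cyc_cos_S, cyc_sin_S, tw_cos_S, tw_sin_S by lia; reflexivity.
Qed.

(* Determinants: each normalised step has determinant 1 - c^2, so the product formula yields a
   quadratic identity between the four trigonometric sums. *)
Definition Csub (z w : C) : C := (fst z - fst w, snd z - snd w).
Definition Cdet (M : M2) : C := Csub (Cmul (m11 M) (m22 M)) (Cmul (m12 M) (m21 M)).

Lemma Cdet_mul X Y : Cdet (Mmul X Y) = Cmul (Cdet X) (Cdet Y).
Proof. destruct_cplx; unfold Cdet, Csub, Mmul, Cadd, Cmul; simpl; f_equal; ring. Qed.

Lemma Cdet_Qstep c l s : Cdet (Qstep c l s) = (1 - c * c, 0).
Proof.
  unfold Cdet, Csub, Qstep, Anorm, Bmat, Mmul, Cadd, Cmul, C1, C0, Cexpi; simpl.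
  rewrite cos_neg, sin_neg; pose proof (sin2_cos2 (l * s)) as H; unfold Rsqr in H.
  f_equal; [|ring].
  transitivity ((sin (l*s) * sin (l*s) + cos (l*s) * cos (l*s)) * (1 - c*c)); [ring|rewrite H; ring].
Qed.

Lemma Cdet_Qprod c l s m : Cdet (Qprod c l s m) = (prodR (fun j => 1 - c j * c j) m, 0).
Proof.
  induction m as [|m IH].
  - unfold Cdet, Csub, prodR, Cmul, C1, C0; simpl; f_equal; ring.
  - simpl Qprod; rewrite Cdet_mul, IH, Cdet_Qstep, prodR_S; unfold Cmul; simpl; f_equal; ring.
Qed.

Lemma trig_sums_det c l s m : (1 <= m)%nat ->
  cyc_cos c l s m ^ 2 + cyc_sin c l s m ^ 2 - tw_cos c l s m ^ 2 - tw_sin c l s m ^ 2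
  = prodR (fun j => 1 - c j * c j) m.
Proof.
  intros Hm; pose proof (Cdet_Qprod c l s m) as H; rewrite Qprod_core in H by exact Hm.
  unfold Cdet, Csub, Mcore, Cmul in H; simpl in H; injection H as H _; rewrite <- H; ring.
Qed.

Lemma Amat_norm a : Amat a = Mscale (/ sin (PI^2/(2*a))) (Anorm (cos (PI^2/(2*a)))).
Proof.
  unfold Amat, Mscale, Anorm, RtoC, Cmul, C1; simpl; f_equal; f_equal; unfold Rdiv; ring.
Qed.

Lemma Mmul_scale_l a X Y : Mmul (Mscale a X) Y = Mscale a (Mmul X Y).
Proof. mx_eq. Qed.
Lemma Mmul_scale_r a X Y : Mmul X (Mscale a Y) = Mscale a (Mmul X Y).
Proof. mx_eq. Qed.
Lemma Mscale_scale a b X : Mscale a (Mscale b X) = Mscale (a * b) X.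
Proof. mx_eq. Qed.

Lemma Tprod_norm alpha ell o m s :
  Tprod alpha ell o m s =
  Mscale (/ prodR (fun j => sin (PI^2/(2*alpha (o+j)%nat))) m)
    (Qprod (fun j => cos (PI^2/(2*alpha (o+j)%nat))) (fun j => ell (o+j)%nat) s m).
Proof.
  induction m as [|m IH].
  - simpl; unfold prodR; simpl; rewrite Rinv_1; mx_eq.
  - simpl Tprod; rewrite IH, Amat_norm, !Mmul_scale_l, Mmul_scale_r, Mscale_scale, prodR_S.
    f_equal; rewrite Rinv_mult; ring.
Qed.

Lemma P_eq (a b c d : R) : a = c -> b = d -> (a, b) = (c, d).
Proof. intros; subst; reflexivity. Qed.

Lemma V_eq (a b c d : C) : a = c -> b = d -> (a, b) = (c, d).
Proof. intros; subst; reflexivity. Qed.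

Lemma eigvec1_id v : eigvec1 M2id v.
Proof. destruct_cplx; unfold eigvec1, Mapply, M2id, Cadd, Cmul, C1, C0; simpl; f_equal; f_equal; ring. Qed.

Lemma geom_mult1_id : geom_mult1 M2id = 2%nat.
Proof.
  unfold geom_mult1, pdec; destruct (excluded_middle_informative _) as [_|Hno]; [reflexivity|].
  exfalso; apply Hno; exists (C1, C0), (C0, C1); split; [apply eigvec1_id|split; [apply eigvec1_id|]].
  intros [a1 a2] [b1 b2] H; unfold Vadd, Vscale, Cmul, Cadd, C1, C0, V0 in H; simpl in H.
  injection H; intros; unfold C0; split; f_equal; lra.
Qed.

Lemma not_lin_indep_line u a b : ~ lin_indep (Vscale a u) (Vscale b u).
Proof.
  intros Hi; destruct (Hi b (Cmul (-1, 0) a)) as [Hb Ha].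
  { destruct_cplx; unfold Vadd, Vscale, Cmul, Cadd, V0, C0; simpl; f_equal; f_equal; ring. }
  subst b; assert (a = C0) as -> by (destruct a; unfold Cmul, C0 in *; simpl in Ha;
    injection Ha; intros; f_equal; lra).
  destruct (Hi C1 C0) as [H1 _].
  { destruct_cplx; unfold Vadd, Vscale, Cmul, Cadd, V0, C0, C1; simpl; f_equal; f_equal; ring. }
  unfold C1, C0 in H1; injection H1; lra.
Qed.

Section CoreEigen.
Variables (S A' B B' : R).
Hypothesis HS : S <> 0.
Let T := Mscale (/ S) (Mcore S A' B B').

Lemma core_eigvec_eqs p q x y : eigvec1 T ((p, q), (x, y)) ->
  - A' * q - B' * x + B * y = 0 /\ A' * p - B' * y - B * x = 0.
Proof.
  intros H; unfold T, eigvec1, Mapply, Mscale, Mcore, Cadd, Cmul, RtoC in H; simpl in H.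
  injection H as H1 H2 _ _; set (r := / S) in *.
  assert (Hr : r <> 0) by (apply Rinv_neq_0_compat; exact HS).
  assert (HrS : r * S = 1) by (unfold r; field; exact HS).
  assert (Hp : r * S * p = p) by (rewrite HrS; ring).
  assert (Hq : r * S * q = q) by (rewrite HrS; ring).
  assert (E1 : r * (- A' * q - B' * x + B * y) = 0) by (ring_simplify in H1; ring_simplify; lra).
  assert (E2 : r * (A' * p - B' * y - B * x) = 0) by (ring_simplify in H2; ring_simplify; lra).
  apply Rmult_integral in E1; apply Rmult_integral in E2; split; tauto.
Qed.

Hypothesis Hdet : A' * A' = B * B + B' * B'.

(* If A' = 0 then B = B' = 0 and T is the identity. *)
Lemma core_identity : A' = 0 -> T = M2id.
Proof.
  intros HA; assert (B = 0) by nra; assert (B' = 0) by nra; subst.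
  unfold T, Mscale, Mcore, M2id, Cmul, RtoC, C1, C0; simpl; f_equal; f_equal; field; exact HS.
Qed.

Lemma core_eigvec : eigvec1 T ((- B', - B), (0, - A')).
Proof.
  unfold T, eigvec1, Mapply, Mscale, Mcore, Cadd, Cmul, RtoC; simpl.
  apply V_eq; apply P_eq; field_simplify; auto; try (field; exact HS);
    replace (B' ^ 2 + B ^ 2 - A' ^ 2) with 0 by nra; unfold Rdiv; ring.
Qed.

Lemma core_eigvec_line v : A' <> 0 -> eigvec1 T v ->
  v = Vscale (snd v) ((B / A', - B' / A'), C1).
Proof.
  intros HA Hv; destruct v as [[p q] [x y]].
  destruct (core_eigvec_eqs p q x y Hv) as [E1 E2].
  unfold Vscale, Cmul, C1; simpl; apply V_eq; apply P_eq.
  - apply (Rmult_eq_reg_l A'); [field_simplify; [lra|exact HA]|exact HA].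
  - apply (Rmult_eq_reg_l A'); [field_simplify; [lra|exact HA]|exact HA].
  - ring.
  - ring.
Qed.

Lemma core_eigenspace :
  (exists v, v <> V0 /\ eigvec1 T v) /\
  (A' = 0 -> geom_mult1 T = 2%nat) /\ (A' <> 0 -> geom_mult1 T = 1%nat).
Proof.
  destruct (Req_dec A' 0) as [HA|HA].
  - rewrite (core_identity HA); split; [|split; [intros _; exact geom_mult1_id|intros []; exact HA]].
    exists (C1, C0); split; [|apply eigvec1_id]; unfold V0, C1, C0; intros H; injection H; lra.
  - assert (Hnz : ((- B', - B), (0, - A')) <> V0) by (unfold V0, C0; intros H; injection H; lra).
    split; [eauto using core_eigvec|split; [intros; contradiction|intros _]].
    unfold geom_mult1, pdec; destruct (excluded_middle_informative _) as [[v [w [Hv [Hw Hi]]]]|_].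
    + exfalso; rewrite (core_eigvec_line v HA Hv), (core_eigvec_line w HA Hw) in Hi.
      exact (not_lin_indep_line _ _ _ Hi).
    + destruct (excluded_middle_informative _) as [_|Hno]; [reflexivity|].
      exfalso; apply Hno; exists ((- B', - B), (0, - A')); split; [exact core_eigvec|exact Hnz].
Qed.
End CoreEigen.

(* Angles: t = pi^2/(2 alpha) is a multiple of pi exactly at the exceptional angles
   alpha = pi/(2k), where cos t = (-1)^k. *)
Lemma sin_nonexceptional a : 0 < a < PI -> ~ is_exceptional a -> sin (PI^2/(2*a)) <> 0.
Proof.
  intros [Ha Hb] Hne H0; apply sin_eq_0_0 in H0; destruct H0 as [k Hk].
  pose proof PI_RGT_0 as Hpi.
  assert (Hx : 0 < PI^2/(2*a)) by (apply Rdiv_lt_0_compat; nra).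
  assert (Hk0 : 0 < IZR k) by (rewrite Hk in Hx; nra).
  apply lt_0_IZR in Hk0; apply Hne; exists (Z.to_nat k); split; [lia|].
  rewrite INR_IZR_INZ, Z2Nat.id by lia.
  assert (Ek : IZR k <> 0) by (apply not_0_IZR; lia).
  assert (PI^2 = IZR k * PI * (2*a)) by (rewrite <- Hk; field; lra).
  apply (Rmult_eq_reg_l (2 * IZR k)); [|lra].
  field_simplify; [nra|lra].
Qed.

Lemma cos_INR_PI k : cos (INR k * PI) = (-1)^k.
Proof.
  induction k as [|k IH]; [simpl; rewrite Rmult_0_l, cos_0; ring|].
  rewrite S_INR, <- tech_pow_Rmult, Rmult_plus_distr_r, Rmult_1_l, neg_cos, IH; ring.
Qed.

Lemma cos_exceptional k : (1 <= k)%nat -> cos (PI^2/(2*(PI/(2*INR k)))) = O_sign k.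
Proof.
  intros Hk; unfold O_sign; rewrite <- cos_INR_PI; f_equal.
  pose proof PI_RGT_0; assert (INR k <> 0) by (apply not_0_INR; lia); field; split; lra.
Qed.

Lemma O_sign_parity k : O_sign k = if Nat.even k then 1 else -1.
Proof.
  unfold O_sign; induction k as [|k IH]; [reflexivity|].
  rewrite <- tech_pow_Rmult, IH, Nat.even_succ, <- Nat.negb_even.
  destruct (Nat.even k); simpl; ring.
Qed.

(* Part (a): F^P = 0 says that the first entry of the normalised monodromy equals
   prod sin t_j, and the determinant identity (with 1 - cos^2 = sin^2) then gives
   F_odd^2 = (twisted sums)^2, the hypothesis of [core_eigenspace]. *)
Lemma nonexceptional_case (n : nat) (alpha ell : nat -> R) :
  (1 <= n)%nat ->
  (forall j, (1 <= j <= n)%nat -> 0 < alpha j < PI) ->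
  (forall j, (1 <= j <= n)%nat -> ~ is_exceptional (alpha j)) ->
  forall sigma : R, 0 < sigma -> F_P n alpha ell sigma = 0 ->
    is_qe_nonexc n alpha ell sigma /\
    (F_odd n alpha ell sigma = 0 -> qe_mult_nonexc n alpha ell sigma = 2%nat) /\
    (F_odd n alpha ell sigma <> 0 -> qe_mult_nonexc n alpha ell sigma = 1%nat).
Proof.
  intros Hn Ha Hne s Hs HF.
  set (c := fun j => cos (PI^2/(2*alpha j))).
  set (S := prodR (fun j => sin (PI^2/(2*alpha j))) n).
  assert (HS : S <> 0) by (apply prodR_nz; intros; apply sin_nonexceptional; auto).
  assert (HA : cyc_cos c ell s n = S).
  { unfold F_P in HF; change (F_even n alpha ell s) with (cyc_cos c ell s n) in HF; unfold S; lra. }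
  assert (HT : Tmat n alpha ell s =
     Mscale (/ S) (Mcore S (cyc_sin c ell s n) (tw_cos c ell s n) (tw_sin c ell s n))).
  { rewrite <- HA at 2; unfold Tmat; rewrite Tprod_norm, Qprod_core by exact Hn; reflexivity. }
  assert (Hsin2 : prodR (fun j => 1 - c j * c j) n = S * S).
  { unfold S; rewrite <- prodR_mul; apply prodR_ext; intros j _; unfold c.
    pose proof (sin2_cos2 (PI^2/(2*alpha j))) as H; unfold Rsqr in H; lra. }
  pose proof (trig_sums_det c ell s n Hn) as Hdet; rewrite Hsin2, HA in Hdet.
  unfold is_qe_nonexc, qe_mult_nonexc; rewrite HT; change (F_odd n alpha ell s) with (cyc_sin c ell s n).
  destruct (core_eigenspace S (cyc_sin c ell s n) (tw_cos c ell s n) (tw_sin c ell s n) HS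
              ltac:(nra)) as [Hev Hmult].
  split; [split; [lra|exact Hev]|exact Hmult].
Qed.

Lemma inv_sqrt2_sq : / sqrt 2 * / sqrt 2 = / 2.
Proof. rewrite <- Rinv_mult, sqrt_sqrt by lra; reflexivity. Qed.

Lemma X_even_val : X_even = ((/2, - / 2), (/2, /2)).
Proof.
  unfold X_even, Cmul, RtoC, Cexpi; simpl; rewrite cos_neg, sin_neg, cos_PI4, sin_PI4.
  pose proof inv_sqrt2_sq; unfold Rdiv; rewrite !Rmult_1_l; apply V_eq; apply P_eq; lra.
Qed.

Lemma X_odd_val : X_odd = ((/2, / 2), (/2, - /2)).
Proof.
  unfold X_odd, Cmul, RtoC, Cexpi; simpl; rewrite cos_neg, sin_neg, cos_PI4, sin_PI4.
  pose proof inv_sqrt2_sq; unfold Rdiv; rewrite !Rmult_1_l; apply V_eq; apply P_eq; lra.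
Qed.

Ltac pairing_val := rewrite ?X_even_val, ?X_odd_val;
  unfold Vdot, Mapply, Mscale, Mcore, Cadd, Cmul, Cconj, RtoC; simpl; apply P_eq; field.

Lemma pairing_ee r A A' B B' : Vdot (Mapply (Mscale r (Mcore A A' B B')) X_even) X_even = (r * (A + B), 0).
Proof. pairing_val. Qed.
Lemma pairing_oo r A A' B B' : Vdot (Mapply (Mscale r (Mcore A A' B B')) X_odd) X_odd = (r * (A - B), 0).
Proof. pairing_val. Qed.
Lemma pairing_eo r A A' B B' : Vdot (Mapply (Mscale r (Mcore A A' B B')) X_even) X_odd = (r * (A' - B'), 0).
Proof. pairing_val. Qed.
Lemma pairing_oe r A A' B B' : Vdot (Mapply (Mscale r (Mcore A A' B B')) X_odd) X_even = (r * (- (A' + B')), 0).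
Proof. pairing_val. Qed.

Lemma scaled_real_C0 r x : r <> 0 -> ((r * x, 0) = C0 <-> x = 0).
Proof.
  intros Hr; unfold C0; split; [intros H; injection H as H; apply Rmult_integral in H; tauto|].
  intros ->; f_equal; ring.
Qed.

Lemma core_pairing r A A' B B' k' k : r <> 0 ->
  (Vdot (Mapply (Mscale r (Mcore A A' B B')) (Xk k')) (Xk k) = C0 <->
   (O_sign k' = O_sign k -> A + O_sign k * B = 0) /\
   (O_sign k' = - O_sign k -> A' + O_sign k * B' = 0)).
Proof.
  intros Hr; rewrite !O_sign_parity; unfold Xk.
  destruct (Nat.even k'), (Nat.even k);
    rewrite ?pairing_ee, ?pairing_oo, ?pairing_eo, ?pairing_oe, scaled_real_C0 by exact Hr;
    (split; [intros; split; intros; lra|]).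
  - intros [H _]; specialize (H eq_refl); lra.
  - intros [_ H]; lra.
  - intros [_ H]; lra.
  - intros [H _]; specialize (H eq_refl); lra.
Qed.

Definition zero_at (c : nat -> R) (m : nat) : nat -> R := fun j => if Nat.eqb j m then 0 else c j.

Lemma cyc_w_split_last c m z : (1 <= m)%nat ->
  cyc_w c m z = cyc_w (zero_at c m) m z + c m * tw_w (zero_at c m) m z.
Proof.
  intros Hm; destruct m as [|m]; [lia|]; rewrite !cyc_w_split; unfold tw_w.
  replace (S m - 1)%nat with m by lia.
  assert (Hch : chain_w c z m = chain_w (zero_at c (S m)) z m).
  { unfold chain_w; apply prodR_ext; intros j Hj; unfold zero_at.
    replace (Nat.eqb j (S m)) with false by (symmetry; apply Nat.eqb_neq; lia); reflexivity. }
  assert (Hz : zero_at c (S m) (S m) = 0) by (unfold zero_at; rewrite Nat.eqb_refl; reflexivity).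
  rewrite Hch, Hz; case_req; ring.
Qed.

Lemma cyc_cos_split_last c l s m : (1 <= m)%nat ->
  cyc_cos c l s m = cyc_cos (zero_at c m) l s m + c m * tw_cos (zero_at c m) l s m.
Proof.
  intros Hm; transitivity (1 * cyc_cos (zero_at c m) l s m + c m * tw_cos (zero_at c m) l s m); [|ring].
  unfold cyc_cos, tw_cos; rewrite <- SumL_lin2; apply SumL_ext; intros z _.
  rewrite cyc_w_split_last by exact Hm; ring.
Qed.

Lemma cyc_sin_split_last c l s m : (1 <= m)%nat ->
  cyc_sin c l s m = cyc_sin (zero_at c m) l s m + c m * tw_sin (zero_at c m) l s m.
Proof.
  intros Hm; transitivity (1 * cyc_sin (zero_at c m) l s m + c m * tw_sin (zero_at c m) l s m); [|ring].
  unfold cyc_sin, tw_sin; rewrite <- SumL_lin2; apply SumL_ext; intros z _.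
  rewrite cyc_w_split_last by exact Hm; ring.
Qed.

(* U_kappa is the normalised product over the component with the closing exceptional vertex
   contributing Anorm 0 = I, i.e. with c_m replaced by 0. *)
Lemma Qstep_0 l s : Qstep 0 l s = Bmat l s.
Proof. mx_eq. Qed.

Lemma Qprod_zero_last c l s m :
  Qprod (zero_at c (S m)) l s (S m) = Mmul (Bmat (l (S m)) s) (Qprod c l s m).
Proof.
  change (Qprod (zero_at c (S m)) l s (S m)) with
    (Mmul (Qstep (zero_at c (S m) (S m)) (l (S m)) s) (Qprod (zero_at c (S m)) l s m)).
  unfold zero_at at 1; rewrite Nat.eqb_refl, Qstep_0; f_equal.
  apply Qprod_ext; intros j Hj; split; [|reflexivity]; unfold zero_at.
  replace (Nat.eqb j (S m)) with false by (symmetry; apply Nat.eqb_neq; lia); reflexivity.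
Qed.

Lemma Umat_norm alpha ell E kappa s :
  let o := offset E kappa in let m := (E kappa - o)%nat in
  (o < E kappa)%nat ->
  Umat alpha ell E kappa s =
  Mscale (/ prodR (fun j => sin (PI^2/(2*alpha (o+j)%nat))) (m - 1))
    (Qprod (zero_at (fun j => cos (PI^2/(2*alpha (o+j)%nat))) m) (fun j => ell (o+j)%nat) s m).
Proof.
  intros o m Ho; unfold Umat; fold o; rewrite Tprod_norm, Mmul_scale_r.
  assert (Hom : (o + m)%nat = E kappa) by (unfold m; lia).
  replace (E kappa - 1 - o)%nat with (m - 1)%nat by (unfold m; lia).
  assert (Hm : (1 <= m)%nat) by (unfold m; lia).
  clearbody m; destruct m as [|m]; [lia|]; replace (S m - 1)%nat with m by lia.
  rewrite Qprod_zero_last, <- Hom; reflexivity.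
Qed.

Lemma count_P_ext P Q K : (forall k, (1 <= k <= K)%nat -> (P k <-> Q k)) ->
  count_P P K = count_P Q K.
Proof.
  intros H; unfold count_P; f_equal; apply filter_ext_in; intros k Hk; apply in_seq in Hk.
  unfold pdec; destruct (excluded_middle_informative (P k)), (excluded_middle_informative (Q k));
    auto; exfalso; [apply n|apply n]; apply H; auto; lia.
Qed.

Section Exceptional.
Variables (n : nat) (alpha ell : nat -> R) (K : nat) (E kexc : nat -> nat).
Hypotheses (Ha : forall j, (1 <= j <= n)%nat -> 0 < alpha j < PI)
  (HE1 : (1 <= E 1%nat)%nat)
  (Hmono : forall kappa, (1 <= kappa < K)%nat -> (E kappa < E (S kappa))%nat)
  (HEK : E K = n)
  (Hexc : forall j, (1 <= j <= n)%nat ->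
        (is_exceptional (alpha j) <-> exists kappa, (1 <= kappa <= K)%nat /\ E kappa = j))
  (Hk : forall kappa, (1 <= kappa <= K)%nat ->
        (1 <= kexc kappa)%nat /\ alpha (E kappa) = PI / (2 * INR (kexc kappa))).

Lemma E_lt a b : (1 <= a)%nat -> (a < b)%nat -> (b <= K)%nat -> (E a < E b)%nat.
Proof.
  intros Ha1 Hab HbK; induction b as [|b IH]; [lia|].
  destruct (Nat.eq_dec a b) as [->|Hne]; [apply Hmono; lia|].
  specialize (IH ltac:(lia) ltac:(lia)); specialize (Hmono b ltac:(lia)); lia.
Qed.

Lemma component_vertices kappa : (1 <= kappa <= K)%nat ->
  (offset E kappa < E kappa)%nat /\
  (forall j, (offset E kappa < j < E kappa)%nat -> 0 < alpha j < PI /\ ~ is_exceptional (alpha j)).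
Proof.
  intros Hkap.
  assert (Hprev : kappa <> 1%nat -> offset E kappa = E (kappa - 1)%nat /\ (E (kappa - 1) < E kappa)%nat).
  { intros Hne; unfold offset; rewrite (proj2 (Nat.eqb_neq _ _) Hne); split; [reflexivity|].
    apply E_lt; lia. }
  assert (HEn : (E kappa <= n)%nat).
  { destruct (Nat.eq_dec kappa K) as [->|]; [lia|]; rewrite <- HEK; apply Nat.lt_le_incl, E_lt; lia. }
  assert (Ho : (offset E kappa < E kappa)%nat).
  { destruct (Nat.eq_dec kappa 1) as [->|Hne]; [unfold offset; simpl; lia|destruct (Hprev Hne); lia]. }
  split; [exact Ho|intros j Hj].
  split; [apply Ha; lia|]; rewrite Hexc by lia; intros [k' [Hk' Ek']].
  destruct (lt_eq_lt_dec k' kappa) as [[Hlt| ->]|Hgt].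
  - destruct (Hprev ltac:(lia)) as [Eo _].
    destruct (Nat.eq_dec k' (kappa - 1)) as [->|Hne]; [lia|].
    assert (E k' < E (kappa - 1))%nat by (apply E_lt; lia); lia.
  - lia.
  - assert (E kappa < E k')%nat by (apply E_lt; lia); lia.
Qed.

Lemma component_condition kappa s : (1 <= kappa <= K)%nat ->
  (qe_cond_exc alpha ell K E kexc kappa s <-> comp_root alpha ell K E kexc kappa s).
Proof.
  intros Hkap; destruct (component_vertices kappa Hkap) as [Ho Hint].
  set (o := offset E kappa) in *; set (m := (E kappa - o)%nat).
  set (c := fun j => cos (PI^2/(2*alpha (o+j)%nat))); set (l := fun j => ell (o+j)%nat).
  set (S := prodR (fun j => sin (PI^2/(2*alpha (o+j)%nat))) (m - 1)).
  assert (Hm : (1 <= m)%nat) by (unfold m; lia).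
  assert (HS : / S <> 0).
  { apply Rinv_neq_0_compat, prodR_nz; intros j Hj.
    destruct (Hint (o + j)%nat ltac:(unfold m in Hj; lia)); apply sin_nonexceptional; auto. }
  assert (HU : Umat alpha ell E kappa s = Mscale (/ S)
     (Mcore (cyc_cos (zero_at c m) l s m) (cyc_sin (zero_at c m) l s m)
            (tw_cos (zero_at c m) l s m) (tw_sin (zero_at c m) l s m))).
  { rewrite Umat_norm, Qprod_core by exact Hm || exact Ho; reflexivity. }
  assert (Hcm : c m = O_sign (kexc kappa)).
  { unfold c; replace (o + m)%nat with (E kappa) by (unfold m; lia).
    destruct (Hk kappa Hkap) as [Hk1 ->]; apply cos_exceptional, Hk1. }
  unfold qe_cond_exc, comp_root; rewrite HU, core_pairing by exact HS.
  change (comp_len E kappa) with m.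
  change (F_even m (comp_vec alpha E kappa) (comp_vec ell E kappa) s) with (cyc_cos c l s m).
  change (F_odd m (comp_vec alpha E kappa) (comp_vec ell E kappa) s) with (cyc_sin c l s m).
  rewrite (cyc_cos_split_last c l s m Hm), (cyc_sin_split_last c l s m Hm), Hcm; reflexivity.
Qed.

Lemma exceptional_case :
  (forall sigma : R, 0 <= sigma ->
     (is_qe_exc alpha ell K E kexc sigma <->
      exists kappa, (1 <= kappa <= K)%nat /\ comp_root alpha ell K E kexc kappa sigma)) /\
  (forall sigma : R, 0 < sigma -> is_qe_exc alpha ell K E kexc sigma ->
     qe_mult_exc alpha ell K E kexc sigma =
     count_P (fun kappa => comp_root alpha ell K E kexc kappa sigma) K) /\
  qe_mult_exc alpha ell K E kexc 0 =
    Nat.div2 (count_P (fun kappa => O_sign (kprev K kexc kappa) = - O_sign (kexc kappa)) K).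
Proof.
  split; [|split].
  - intros s Hs; unfold is_qe_exc; split.
    + intros [_ [k [Hk1 Hc]]]; exists k; split; [exact Hk1|apply component_condition; auto].
    + intros [k [Hk1 Hc]]; split; [exact Hs|exists k; split; [exact Hk1|]].
      apply component_condition; auto.
  - intros s Hs _; unfold qe_mult_exc, pdec.
    destruct (excluded_middle_informative (0 < s)); [|lra].
    apply count_P_ext; intros; apply component_condition; auto.
  - unfold qe_mult_exc, pdec; destruct (excluded_middle_informative (0 < 0)); [lra|].
    f_equal; apply count_P_ext; intros k _; rewrite !O_sign_parity.
    destruct (Nat.even (kprev K kexc k)), (Nat.even (kexc k)); split; intros; lra.
Qed.
End Exceptional.

Theorem theorem2p12 :
  (* (a) non-exceptional polygons *)
  (forall (n : nat) (alpha ell : nat -> R),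
     (1 <= n)%nat ->
     (forall j, (1 <= j <= n)%nat -> 0 < alpha j < PI) ->
     (forall j, (1 <= j <= n)%nat -> 0 < ell j) ->
     (forall j, (1 <= j <= n)%nat -> ~ is_exceptional (alpha j)) ->
     forall sigma : R, 0 < sigma -> F_P n alpha ell sigma = 0 ->
       is_qe_nonexc n alpha ell sigma /\
       (F_odd n alpha ell sigma = 0 -> qe_mult_nonexc n alpha ell sigma = 2%nat) /\
       (F_odd n alpha ell sigma <> 0 -> qe_mult_nonexc n alpha ell sigma = 1%nat))
  /\
  (* (b) polygons with exceptional angles *)
  (forall (n : nat) (alpha ell : nat -> R) (K : nat) (E kexc : nat -> nat),
     (1 <= n)%nat ->
     (forall j, (1 <= j <= n)%nat -> 0 < alpha j < PI) ->
     (forall j, (1 <= j <= n)%nat -> 0 < ell j) ->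
     (1 <= K)%nat ->
     (1 <= E 1%nat)%nat ->
     (forall kappa, (1 <= kappa < K)%nat -> (E kappa < E (S kappa))%nat) ->
     E K = n ->
     (forall j, (1 <= j <= n)%nat ->
        (is_exceptional (alpha j) <-> exists kappa, (1 <= kappa <= K)%nat /\ E kappa = j)) ->
     (forall kappa, (1 <= kappa <= K)%nat ->
        (1 <= kexc kappa)%nat /\ alpha (E kappa) = PI / (2 * INR (kexc kappa))) ->
     (forall sigma : R, 0 <= sigma ->
        (is_qe_exc alpha ell K E kexc sigma <->
         exists kappa, (1 <= kappa <= K)%nat /\ comp_root alpha ell K E kexc kappa sigma)) /\
     (forall sigma : R, 0 < sigma -> is_qe_exc alpha ell K E kexc sigma ->
        qe_mult_exc alpha ell K E kexc sigma =
        count_P (fun kappa => comp_root alpha ell K E kexc kappa sigma) K) /\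
     qe_mult_exc alpha ell K E kexc 0 =
       Nat.div2 (count_P (fun kappa =>
          O_sign (kprev K kexc kappa) = - O_sign (kexc kappa)) K)).
Proof.
  split.
  - intros n alpha ell Hn Ha _ Hne; exact (nonexceptional_case n alpha ell Hn Ha Hne).
  - intros n alpha ell K E kexc _ Ha _ _ HE1 Hmono HEK Hexc Hk.
    exact (exceptional_case n alpha ell K E kexc Ha HE1 Hmono HEK Hexc Hk).
Qed.
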